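(* Let $p$ be a prime, $a\in\mathbb{Q}_p$, $a\ne0$, with $\sqrt{-a}\in\mathbb{Q}_p$, $A=|a|_p$, and $f(x)=\frac{ax}{x^2+a}$ on $\mathbb{Q}_p$. For every $r\in\{p^k:k\in\mathbb Z\}$ with $0<r<\sqrt A$, the measure-preserving dynamical system $(S_r(0),f,\mu)$ is not ergodic, where $\mu$ is the normalized Haar measure on $S_r(0)$.
   Context: $S_r(0)=\{x\in\mathbb{Q}_p:|x|_p=r\}$, equipped with the $\sigma$-algebra generated by its closed balls. The normalized Haar measure $\mu$ on $S_r(0)$ is the probability measure with $\mu(V_\rho(c))=\frac{p\rho}{r(p-1)}$ for every closed ball $V_\rho(c)=\{x:|x-c|_p\le\rho\}\subset S_r(0)$; $f$ maps $S_r(0)$ to itself and preserves $\mu$. A measure-preserving system is ergodic if every measurable set $V$ with $f^{-1}(V)=V$ (invariant set) has $\mu(V)\in\{0,1\}$. *)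

From HB Require Import structures.
From mathcomp Require Import all_boot all_order all_algebra.
From mathcomp Require Import all_classical all_reals all_analysis.

Set Implicit Arguments.
Unset Strict Implicit.
Unset Printing Implicit Defensive.

Import Order.TTheory GRing.Theory Num.Theory.
Local Open Scope classical_set_scope.
Local Open Scope ring_scope.

(* The p-adic absolute value on the rationals, |x|_p = p^(-v_p(x)),
   with v_p(x) = v_p(numerator) - v_p(denominator), and |0|_p = 0. *)
Definition padic_abs_rat (R : realType) (p : nat) (x : rat) : R :=
  if x == 0 then 0
  else (p%:R : R) ^ ((logn p `|denq x|%N)%:Z - (logn p `|numq x|%N)%:Z).

(* (K, abs) is a model of the field of p-adic numbers Q_p: a field with a
   non-archimedean absolute value [abs] extending the p-adic absolute value
   of Q (via the canonical embedding [ratr]), complete, and in which Q is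
   dense.  This is exactly "the completion of Q w.r.t. |.|_p", and
   determines (K, abs) up to isometric field isomorphism. *)
Definition is_Qp (R : realType) (p : nat) (K : fieldType) (abs : K -> R) : Prop :=
  (forall x, 0 <= abs x) /\
      (forall x, abs x = 0 <-> x = 0) /\
      (forall x y, abs (x * y) = abs x * abs y) /\
      (forall x y, abs (x + y) <= Num.max (abs x) (abs y)) /\
      (forall q : rat, abs (ratr q) = padic_abs_rat R p q) /\
      (forall u : nat -> K,
          (forall e : R, 0 < e -> exists N, forall m n, (N <= m)%N -> (N <= n)%N ->
               abs (u m - u n) < e) ->
          exists l : K, forall e : R, 0 < e -> exists N, forall n, (N <= n)%N ->
               abs (u n - l) < e) /\
      (forall (x : K) (e : R), 0 < e -> exists q : rat, abs (x - ratr q) < e).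

Definition sphere (R : realType) (K : fieldType) (abs : K -> R) (r : R) : set K :=
  [set x | abs x = r].
Definition cball (R : realType) (K : fieldType) (abs : K -> R) (c : K) (rho : R) : set K :=
  [set x | abs (x - c) <= rho].

(* the closed balls contained in S_r(0) (radii are values of |.|_p, i.e. p^k);
   these generate the sigma-algebra *)
Definition sphere_balls (R : realType) (p : nat) (K : fieldType) (abs : K -> R) (r : R)
  : set (set K) :=
  [set B | exists (c : K) (k : int),
      B = cball abs c ((p%:R : R) ^ k) /\ cball abs c ((p%:R : R) ^ k) `<=` sphere abs r].

(* K viewed as a pointed type (base point 0), needed to build the
   measurable space of the sigma-algebra generated by [sphere_balls]. *)
Definition ptK (K : fieldType) : Type := K.
HB.instance Definition _ (K : fieldType) := Choice.on (ptK K).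
HB.instance Definition _ (K : fieldType) := isPointed.Build (ptK K) (0 : K).

(* the measurable space: K with the sigma-algebra generated by the closed
   balls contained in S_r(0); its trace on S_r(0) is the sigma-algebra of
   S_r(0) generated by its closed balls *)
Definition Ssigma (R : realType) (p : nat) (K : fieldType) (abs : K -> R) (r : R) :=
  g_sigma_algebraType (sphere_balls p abs r : set (set (ptK K))).

From HB Require Import structures.
From mathcomp Require Import all_boot all_order all_algebra.
From mathcomp Require Import all_classical all_reals all_analysis.
From mathcomp Require Import ring lra.
Import Order.TTheory GRing.Theory Num.Theory.
Local Open Scope classical_set_scope.
Local Open Scope ring_scope.
Set Implicit Arguments.
Unset Strict Implicit.

(* On S_r(0) the map f is a small perturbation of the identity: f(x) - x = -x^3/(x^2 + a),
   so |f(x) - x| = r^3/|a|.  Since |a| = |sqrt(-a)|^2 with |sqrt(-a)| a power of p strictly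
   above r, we get r^2 p^2 <= |a|, hence |f(x) - x| <= r/p^2.  By the ultrametric inequality
   every closed ball of radius r/p^2 inside S_r(0) is then f-invariant, and its Haar measure
   1/(p(p-1)) is neither 0 nor 1. *)

Definition ultrametric_abs (R : realType) (K : fieldType) (abs : K -> R) :=
  [/\ forall x, 0 <= abs x, forall x, abs x = 0 <-> x = 0,
      {morph abs : x y / x * y}
    & forall x y, abs (x + y) <= Num.max (abs x) (abs y)].

Section Ultrametric.
Variables (R : realType) (K : fieldType) (abs : K -> R).
Hypothesis habs : ultrametric_abs abs.

Let abs_ge0 x : 0 <= abs x. Proof. by case: habs. Qed.
Let abs_eq0 x : abs x = 0 <-> x = 0. Proof. by case: habs. Qed.
Let absM : {morph abs : x y / x * y}. Proof. by case: habs. Qed.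
Let abs_le_max x y : abs (x + y) <= Num.max (abs x) (abs y). Proof. by case: habs. Qed.

Lemma abs_neq0 x : x != 0 -> abs x != 0.
Proof. by apply: contraNneq => /abs_eq0 ->. Qed.

Lemma abs_gt0 x : x != 0 -> 0 < abs x.
Proof. by move=> x0; rewrite lt0r abs_neq0 ?abs_ge0. Qed.

Lemma abs1 : abs 1 = 1.
Proof.
have n0 : abs 1 != 0 by rewrite abs_neq0 ?oner_eq0.
by apply: (mulfI n0); rewrite -absM !mulr1.
Qed.

Lemma absN x : abs (- x) = abs x.
Proof.
have absN1 : abs (-1) = 1.
  have := absM (-1) (-1); rewrite mulrNN mulr1 abs1 => sq1.
  have := abs_ge0 (-1); nra.
by rewrite -mulN1r absM absN1 mul1r.
Qed.

Lemma absV x : abs x^-1 = (abs x)^-1.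
Proof.
have [->|x0] := eqVneq x 0; first by rewrite invr0 (proj2 (abs_eq0 0)) ?invr0.
by apply: (mulfI (abs_neq0 x0)); rewrite -absM !mulfV ?abs1 ?abs_neq0.
Qed.

Lemma absX x n : abs (x ^+ n) = abs x ^+ n.
Proof. by elim: n => [|n IH]; rewrite ?abs1 // !exprS absM IH. Qed.

Lemma absXz x (k : int) : abs (x ^ k) = abs x ^ k.
Proof. by case: k => n; rewrite ?NegzE ?invr_expz ?exprz_inv ?absV absX. Qed.

Lemma abs_addl_eq x y : abs x < abs y -> abs (x + y) = abs y.
Proof.
move=> lt_xy; apply/eqP; rewrite eq_le; apply/andP; split.
  by apply: le_trans (abs_le_max _ _) _; rewrite ge_max lexx ltW.
have := abs_le_max (x + y) (- x); rewrite addrC addKr absN le_max.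
by rewrite [abs y <= abs x]leNgt lt_xy orbF.
Qed.

Lemma abs_subr_le_max x y z : abs (x - z) <= Num.max (abs (x - y)) (abs (y - z)).
Proof. by have := abs_le_max (x - y) (y - z); rewrite addrA subrK. Qed.

Lemma cball_sub_sphere c rho : rho < abs c -> cball abs c rho `<=` sphere abs (abs c).
Proof.
move=> rho_c x; rewrite /cball /sphere /= => x_c.
by rewrite -[x](subrK c) abs_addl_eq // (le_lt_trans x_c).
Qed.

Lemma sphere_preimage_cball (g : K -> K) c rho :
  rho < abs c -> (forall x, abs x = abs c -> abs (g x - x) <= rho) ->
  sphere abs (abs c) `&` g @^-1` cball abs c rho = cball abs c rho.
Proof.
move=> rho_c g_near; apply/seteqP; split => x; rewrite /cball /=.
  move=> [x_sph gx_c]; apply: le_trans (abs_subr_le_max x (g x) c) _.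
  by rewrite ge_max gx_c -opprB absN g_near.
move=> x_c; have x_sph := cball_sub_sphere rho_c x_c; split => //=.
apply: le_trans (abs_subr_le_max (g x) x c) _.
by rewrite ge_max x_c g_near.
Qed.

Variable a : K.

Lemma abs_map_sub_id x : abs x ^+ 2 < abs a ->
  abs (a * x / (x ^+ 2 + a) - x) = abs x ^+ 3 / abs a.
Proof.
move=> x2_a; have den : abs (x ^+ 2 + a) = abs a by rewrite abs_addl_eq ?absX.
have den0 : x ^+ 2 + a != 0.
  by apply: contraTneq x2_a => /abs_eq0; rewrite den => ->; rewrite -leNgt exprn_ge0.
have -> : a * x / (x ^+ 2 + a) - x = - x ^+ 3 / (x ^+ 2 + a) by field.
by rewrite absM absV absN absX den.
Qed.

Lemma abs_map_sub_id_le (b r : R) x : 1 < b -> 0 < r -> (b * r) ^+ 2 <= abs a ->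
  abs x = r -> abs (a * x / (x ^+ 2 + a) - x) <= r / b ^+ 2.
Proof.
move=> b1 r0 br_a x_r.
have r2_a : r ^+ 2 < abs a.
  by apply: lt_le_trans br_a; rewrite exprMn ltr_pMl ?exprn_gt0 ?exprn_egt1.
rewrite abs_map_sub_id x_r //.
rewrite ler_pdivrMr ?(lt_trans _ r2_a) ?exprn_gt0 // mulrAC.
rewrite ler_pdivlMr ?exprn_gt0 ?(lt_trans ltr01) //.
have -> : r ^+ 3 * b ^+ 2 = r * (b * r) ^+ 2 by ring.
by rewrite ler_pM2l.
Qed.
End Ultrametric.

Section Qp.
Variables (R : realType) (p : nat) (K : fieldType) (abs : K -> R).
Hypothesis hK : is_Qp p abs.

Lemma is_Qp_ultrametric : ultrametric_abs abs.
Proof. by case: hK => ? [? [? [? _]]]; split. Qed.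

Lemma Qp_abs_natp : prime p -> abs (p%:R : K) = (p%:R)^-1.
Proof.
case: hK => _ [_ [_ [_ [abs_ratr _]]]] p_prime.
rewrite -(ratr_nat K p) abs_ratr /padic_abs_rat pnatr_eq0 (gtn_eqF (prime_gt0 p_prime)).
have := numq_int p; have := denq_int p; rewrite -pmulrn => -> ->.
rewrite logn1 logn_prime // eqxx.
by rewrite sub0r -exprz_inv expr1z.
Qed.

Lemma Qp_abs_exprz x : x != 0 -> exists j : int, abs x = (p%:R : R) ^ j.
Proof.
case: hK => _ [_ [_ [_ [abs_ratr [_ Q_dense]]]]] x0.
have habs := is_Qp_ultrametric.
have [q xq] := Q_dense x (abs x) (abs_gt0 habs x0).
have : abs (ratr q) = abs x.
  by rewrite -[ratr q](subrK x) abs_addl_eq // -opprB (absN habs).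
rewrite abs_ratr /padic_abs_rat; case: eqP => [_ x_0|_ <-]; last by eexists.
by move: (abs_gt0 habs x0); rewrite -x_0 ltxx.
Qed.

Lemma Qp_abs_exprz_invp (k : int) : prime p -> abs ((p%:R : K)^-1 ^ k) = (p%:R : R) ^ k.
Proof.
have habs := is_Qp_ultrametric.
by move=> p_prime; rewrite (absXz habs) (absV habs) Qp_abs_natp // invrK.
Qed.
End Qp.

Section PowerArithmetic.
Variables (R : realType) (b : R).
Hypothesis b_gt1 : 1 < b.

Let b_neq0 : b != 0. Proof. by rewrite gt_eqF // (lt_trans ltr01). Qed.

Lemma exprz_ltr_mul (k j : int) : b ^ k < b ^ j -> b * b ^ k <= b ^ j.
Proof.
rewrite ltr_eXz2l // -[X in X * _]expr1z -expfzDr // ler_eXz2l //.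
by rewrite addrC lezD1.
Qed.

Lemma exprzB2 (k : int) : b ^ (k - 2%:Z) = b ^ k / b ^+ 2.
Proof. by rewrite expfzDr // -exprz_inv. Qed.

Lemma haar_ball_ratio (k : int) :
  b * b ^ (k - 2%:Z) / (b ^ k * (b - 1)) = (b * (b - 1))^-1.
Proof.
have bk0 : b ^ k != 0 by rewrite expfz_neq0.
have b1 : b - 1 != 0 by rewrite subr_eq0 gt_eqF.
by rewrite exprzB2; field; rewrite ?bk0 ?b1 ?b_neq0.
Qed.
End PowerArithmetic.

Lemma invf_mul_subr1_in01 (R : realType) (b : R) : 2 <= b -> 0 < (b * (b - 1))^-1 < 1.
Proof.
move=> b_ge2; have gt1 : 1 < b * (b - 1) by nra.
by rewrite invr_gt0 invf_lt1 (lt_trans ltr01 gt1).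
Qed.

Theorem theorem3p5 (R : realType) (p : nat) (K : fieldType) (abs : K -> R)
  (hp : prime p) (hK : is_Qp p abs)
  (a : K) (ha : a != 0) (hsq : exists s : K, s * s = - a)
  (r : R) (hr : exists k : int, r = (p%:R : R) ^ k)
  (hr0 : 0 < r) (hrA : r < Num.sqrt (abs a))
  (mu : {measure set (Ssigma p abs r) -> \bar R})
  (hmu : forall (c : K) (k : int),
      cball abs c ((p%:R : R) ^ k) `<=` sphere abs r ->
      mu (cball abs c ((p%:R : R) ^ k))
        = ((p%:R * (p%:R : R) ^ k) / (r * (p%:R - 1)))%:E) :
  let f := fun x : K => a * x / (x ^+ 2 + a) in
  ~ (forall V : set (Ssigma p abs r),
        measurable V -> V `<=` sphere abs r ->
        sphere abs r `&` (f @^-1` V) = V ->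
        mu V = 0%E \/ mu V = 1%E).
Proof.
move=> f f_ergodic.
have habs := is_Qp_ultrametric hK.
have p_ge2 : 2 <= (p%:R : R) by rewrite ler_nat prime_gt1.
have p_gt1 : 1 < (p%:R : R) by rewrite ltr1n prime_gt1.
have p_gt0 : 0 < (p%:R : R) := lt_trans ltr01 p_gt1.
case: hr => k r_pk; subst r.
case: hsq => s s2_a.
have abs_a : abs a = abs s ^+ 2 by rewrite -(absX habs) expr2 s2_a (absN habs).
have s_neq0 : s != 0 by apply: contraNneq ha => s0; rewrite -oppr_eq0 -s2_a s0 mul0r.
have [j abs_s] := Qp_abs_exprz hK s_neq0.
have ps_le : p%:R * p%:R ^ k <= abs s.
  rewrite abs_s; apply: exprz_ltr_mul => //; rewrite -abs_s.
  by move: hrA; rewrite abs_a sqrtr_sqr ger0_norm // ltW // abs_gt0.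
pose c : K := (p%:R)^-1 ^ k.
have abs_c : abs c = p%:R ^ k := Qp_abs_exprz_invp hK k hp.
pose rho := (p%:R : R) ^ (k - 2%:Z).
have rho_c : rho < abs c by rewrite abs_c ltr_eXz2l // gtrBl.
have f_near x : abs x = abs c -> abs (f x - x) <= rho.
  rewrite abs_c /rho exprzB2 //; apply: abs_map_sub_id_le => //.
  by rewrite abs_a ler_pXn2r ?nnegrE ?(ltW (abs_gt0 habs s_neq0)) ?(ltW (mulr_gt0 p_gt0 hr0)).
have V_sub := cball_sub_sphere habs rho_c; rewrite abs_c in V_sub.
have V_inv := sphere_preimage_cball habs rho_c f_near; rewrite abs_c in V_inv.
have V_meas : measurable (cball abs c rho : set (Ssigma p abs (p%:R ^ k))).
  by apply: sub_gen_smallest; exists c, (k - 2%:Z).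
have mu_V : mu (cball abs c rho) = ((p%:R * (p%:R - 1))^-1)%:E.
  by rewrite hmu // haar_ball_ratio.
have /andP[ratio_gt0 ratio_lt1] := invf_mul_subr1_in01 p_ge2.
by case: (f_ergodic _ V_meas V_sub V_inv); rewrite mu_V => -[/eqP];
  rewrite ?(gt_eqF ratio_gt0) ?(lt_eqF ratio_lt1).
Qed.
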